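(* Let $u\in(\mathbb{N}\cup\{0\})^m$ and put $M:=\{x\in\mathbb{R}^m:0\leq x\leq u\}$ (entrywise order) with the metric induced by $\|\cdot\|_\infty$. Then $M\cap\mathbb{Z}^m$ is the unique optimal code in $(M,\|\cdot\|_\infty)$ of size $\prod_{i=1}^m(u_i+1)$.
   Context: For a finite $C\subseteq M$, $\delta(C):=\min\{\|x-y\|_\infty:x,y\in C,x\neq y\}$. An optimal code of size $n$ is an $n$-element subset $C\subseteq M$ maximizing $\delta(C)$ among all $n$-element subsets of $M$. *)

From HB Require Import structures.
From mathcomp Require Import all_boot all_order all_algebra.
From mathcomp Require Import reals.
Set Implicit Arguments. Unset Strict Implicit. Unset Printing Implicit Defensive.
Import Order.TTheory GRing.Theory Num.Theory.
Local Open Scope ring_scope.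

Definition dist_inf (R : realType) (m : nat) (x y : 'rV[R]_m) : R :=
  \big[Num.max/0]_(i < m) `|x ord0 i - y ord0 i|.

Definition in_box (R : realType) (m : nat) (u : 'I_m -> nat) (x : 'rV[R]_m) : bool :=
  [forall i, (0 <= x ord0 i) && (x ord0 i <= (u i)%:R)].

Definition box_lattice (R : realType) (m : nat) (u : 'I_m -> nat) : pred 'rV[R]_m :=
  [pred x | in_box u x && [forall i, x ord0 i \is a Num.int]].

(* A finite code is a duplicate-free list of points.
   delta C = min { ||x - y||_oo : x, y in C, x <> y } (0 by convention if C has < 2 points). *)
Definition code_dists (R : realType) (m : nat) (C : seq 'rV[R]_m) : seq R :=
  [seq dist_inf p.1 p.2 | p <- [seq (x, y) | x <- C, y <- C] & p.1 != p.2].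

Definition delta (R : realType) (m : nat) (C : seq 'rV[R]_m) : R :=
  let ds := code_dists C in \big[Num.min/head 0 ds]_(d <- ds) d.

Definition is_code (R : realType) (m : nat) (u : 'I_m -> nat) (n : nat)
  (C : seq 'rV[R]_m) : Prop :=
  [/\ uniq C, size C = n & all (in_box u) C].

Definition optimal_code (R : realType) (m : nat) (u : 'I_m -> nat) (n : nat)
  (C : seq 'rV[R]_m) : Prop :=
  is_code u n C /\ forall C' : seq 'rV[R]_m, is_code u n C' -> delta C' <= delta C.

(* Points of a code with minimum distance at least 1 have pairwise distinct
   coordinatewise ceilings, and pairwise distinct floors.  For a code of size
   #|M ∩ Z^m| inside M, both roundings are therefore bijections onto M ∩ Z^m,
   so the coordinate sums of all ceilings and of all floors agree; since
   ceil >= floor this forces ceil = floor, i.e. every point is integral.  As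
   M ∩ Z^m itself has minimum distance 1 (when it has two points), it is
   optimal, and any code at least as good is 1-separated, hence equal to it. *)

From HB Require Import structures.
From mathcomp Require Import all_boot all_order all_algebra.
From mathcomp Require Import reals.
From mathcomp Require Import lra.
Import Order.TTheory GRing.Theory Num.Theory.
Local Open Scope ring_scope.

Section MinOfSeq.
Set Implicit Arguments. Unset Strict Implicit.
Context {disp : Order.disp_t} {T : orderType disp}.
Implicit Types (s : seq T) (idx dflt t : T).
Local Open Scope order_scope.

Lemma bigmin_le_mem idx s t : t \in s -> \big[Order.min/idx]_(e <- s) e <= t.
Proof.
elim: s => // a s IHs; rewrite inE big_cons => /predU1P [->|t_s].
  by rewrite ge_min lexx.
by rewrite ge_min IHs ?orbT.
Qed.

Lemma mem_bigmin_head dflt s : s != [::] -> \big[Order.min/head dflt s]_(e <- s) e \in s.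
Proof.
case: s => // a s _ /=; rewrite big_seq.
apply: (big_ind (fun v => v \in a :: s)) => //; first exact: mem_head.
by move=> v w v_s w_s; rewrite minEle; case: ifP.
Qed.

Lemma eq_bigmin_head dflt s1 s2 : s1 =i s2 ->
  \big[Order.min/head dflt s1]_(e <- s1) e = \big[Order.min/head dflt s2]_(e <- s2) e.
Proof.
move=> eq_s; have [s1_nil|s1_nz] := eqVneq s1 [::].
  have s2_nil : s2 = [::].
    by case: s2 eq_s => // a s2 /(_ a); rewrite s1_nil mem_head.
  by rewrite s1_nil s2_nil.
have s2_nz : s2 != [::].
  apply: contraNneq s1_nz => s2_nil.
  by case: s1 eq_s => // a s1 /(_ a); rewrite s2_nil mem_head.
apply/le_anti; rewrite !bigmin_le_mem //.
  by rewrite -eq_s mem_bigmin_head.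
by rewrite eq_s mem_bigmin_head.
Qed.

End MinOfSeq.

Section BoxCode.
Set Implicit Arguments. Unset Strict Implicit.
Variables (R : realType) (m : nat) (u : 'I_m -> nat).
Local Notation N := (\prod_(i < m) (u i).+1)%N.
Implicit Types (x y : 'rV[R]_m) (C : seq 'rV[R]_m).

Lemma ler_dist_inf x y i : `|x ord0 i - y ord0 i| <= dist_inf x y.
Proof. by rewrite /dist_inf (bigD1 i) //= le_max lexx. Qed.

Lemma dist_inf_lt x y (d : R) :
  0 < d -> (forall i, `|x ord0 i - y ord0 i| < d) -> dist_inf x y < d.
Proof.
move=> d_gt0 lt_d; apply: (big_ind (fun v => v < d)) => // v w.
by rewrite gt_max => -> ->.
Qed.

Definition separated (d : R) C := {in C &, forall x y, x != y -> d <= dist_inf x y}.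

Lemma separated_small d C : (size C <= 1)%N -> separated d C.
Proof. by case: C => [|a [|b s]] //= _ x y; rewrite !inE => /eqP-> /eqP->; rewrite eqxx. Qed.

Lemma mem_code_dists C x y :
  x \in C -> y \in C -> x != y -> dist_inf x y \in code_dists C.
Proof.
move=> xC yC neq_xy; apply/mapP; exists (x, y) => //.
by rewrite mem_filter /= neq_xy; apply/allpairsP; exists (x, y).
Qed.

Lemma code_distsP C d :
  reflect (exists x y, [/\ x \in C, y \in C, x != y & d = dist_inf x y])
          (d \in code_dists C).
Proof.
apply: (iffP idP) => [|[x [y [xC yC neq_xy ->]]]]; last exact: mem_code_dists.
case/mapP => -[x y]; rewrite mem_filter /= => /andP [neq_xy] + ->.
case/allpairsP => -[a b] /= [aC bC [eq_xa eq_yb]].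
by exists x, y; rewrite eq_xa eq_yb in neq_xy *.
Qed.

Lemma eq_mem_code_dists C1 C2 : C1 =i C2 -> code_dists C1 =i code_dists C2.
Proof.
move=> eqC d; apply/code_distsP/code_distsP => -[x [y [xC yC neq_xy ->]]].
  by exists x, y; rewrite -!eqC.
by exists x, y; rewrite !eqC.
Qed.

Lemma eq_delta C1 C2 : C1 =i C2 -> delta C1 = delta C2.
Proof. by move/eq_mem_code_dists; apply: eq_bigmin_head. Qed.

Lemma delta_small C : (size C <= 1)%N -> delta C = 0.
Proof. by case: C => [|a [|b s]] //= _; rewrite /delta /code_dists /= ?eqxx big_nil. Qed.

Lemma delta_mem C : code_dists C != [::] -> delta C \in code_dists C.
Proof. exact: mem_bigmin_head. Qed.

Lemma separated_of_delta_ge d C : d <= delta C -> separated d C.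
Proof.
move=> le_d x y xC yC neq_xy.
exact: le_trans le_d (bigmin_le_mem _ (mem_code_dists xC yC neq_xy)).
Qed.

Lemma delta_ge d C : uniq C -> (1 < size C)%N -> separated d C -> d <= delta C.
Proof.
case: C => [|a [|b s]] // uC _ sepC.
have neq_ab : a != b by apply: contraNneq (andP uC).1 => ->; rewrite mem_head.
have b_in : b \in [:: a, b & s] by rewrite !inE eqxx orbT.
have dists_nz : code_dists [:: a, b & s] != [::].
  by have := mem_code_dists (mem_head a (b :: s)) b_in neq_ab; case: code_dists.
by case/code_distsP: (delta_mem dists_nz) => x [y [xC yC neq_xy ->]]; apply: sepC.
Qed.

Lemma normr_intrB_ge1 (a b : R) :
  a \is a Num.int -> b \is a Num.int -> a != b -> 1 <= `|a - b|.
Proof.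
move=> a_int b_int neq_ab.
have /natrP [n n_eq] : `|a - b| \is a Num.nat by rewrite natr_norm_int ?rpredB.
rewrite n_eq ler1n lt0n; apply: contra_neq neq_ab => n0.
by apply/eqP; rewrite -subr_eq0 -normr_eq0 n_eq n0.
Qed.

Lemma separated_int C : {in C, forall x i, x ord0 i \is a Num.int} -> separated 1 C.
Proof.
move=> C_int x y xC yC neq_xy.
have [i neq_i] : exists i, x ord0 i != y ord0 i.
  apply/existsP; apply: contraNT neq_xy; rewrite negb_exists => /forallP eq_xy.
  by apply/eqP/rowP => i; apply/eqP/negPn/eq_xy.
exact: le_trans (normr_intrB_ge1 (C_int x xC i) (C_int y yC i) neq_i) (ler_dist_inf x y i).
Qed.

Definition lattice_index := {dffun forall i : 'I_m, 'I_(u i).+1}.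
Definition lattice_point (f : lattice_index) : 'rV[R]_m := \row_i (f i : nat)%:R.
Definition lattice : seq 'rV[R]_m := map lattice_point (enum lattice_index).

Lemma lattice_point_inj : injective lattice_point.
Proof.
move=> f g /rowP eq_fg; apply/ffunP => i; apply/val_inj/eqP.
by have := eq_fg i; rewrite !mxE => /eqP; rewrite eqr_nat.
Qed.

Lemma uniq_lattice : uniq lattice.
Proof. by rewrite map_inj_uniq ?enum_uniq //; apply: lattice_point_inj. Qed.

Lemma size_lattice : size lattice = N.
Proof.
rewrite size_map -cardE card_dep_ffun foldrE big_map big_enum.
by under eq_bigr do rewrite card_ord.
Qed.

Lemma mem_lattice : lattice =i box_lattice u.
Proof.
move=> x; apply/mapP/idP => [[f _ ->]|].
  rewrite inE; apply/andP; split; apply/forallP => i; rewrite mxE ?natr_int //.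
  by rewrite ler0n ler_nat -ltnS ltn_ord.
rewrite inE => /andP [/forallP x_box /forallP x_int].
have x_nat i : x ord0 i \is a Num.nat by rewrite natrEint x_int; case/andP: (x_box i).
have x_lt i : (Num.truncn (x ord0 i) < (u i).+1)%N.
  by rewrite ltnS -(ler_nat R) truncnK //; case/andP: (x_box i).
exists [ffun i => Ordinal (x_lt i)]; first by rewrite mem_enum.
by apply/rowP => i; rewrite !mxE ffunE /= truncnK // [i]ord1.
Qed.

Lemma lattice_is_code : is_code u N lattice.
Proof.
split; [exact: uniq_lattice | exact: size_lattice |].
by apply/allP => x; rewrite mem_lattice inE => /andP [].
Qed.

Lemma separated_lattice : separated 1 lattice.
Proof. by apply: separated_int => x; rewrite mem_lattice inE => /andP [_ /forallP]. Qed.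

Lemma delta_lattice_ge1 : (1 < N)%N -> 1 <= delta lattice.
Proof.
move=> N_gt1; apply: delta_ge; rewrite ?size_lattice //.
  exact: uniq_lattice.
exact: separated_lattice.
Qed.

Lemma box_lattice_of_sub C :
  uniq C -> (N <= size C)%N -> {subset C <= box_lattice u} -> C =i box_lattice u.
Proof.
move=> uC sizeC sub_C x; rewrite -mem_lattice.
apply: (uniq_min_size uC _ _).2; last by rewrite size_lattice.
by move=> y /sub_C; rewrite mem_lattice.
Qed.

Definition ceil_row x : 'rV[R]_m := \row_i (Num.ceil (x ord0 i))%:~R.
Definition floor_row x : 'rV[R]_m := \row_i (Num.floor (x ord0 i))%:~R.

Lemma ceil_row_box_lattice x : in_box u x -> ceil_row x \in box_lattice u.
Proof.
move=> /forallP x_box; rewrite inE; apply/andP; split; apply/forallP => i;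
  rewrite mxE ?intr_int //; case/andP: (x_box i) => x_ge0 x_le.
by rewrite (le_trans x_ge0 (ceil_ge _)) pmulrn ler_int ceil_le_int -pmulrn.
Qed.

Lemma floor_row_box_lattice x : in_box u x -> floor_row x \in box_lattice u.
Proof.
move=> /forallP x_box; rewrite inE; apply/andP; split; apply/forallP => i;
  rewrite mxE ?intr_int //; case/andP: (x_box i) => x_ge0 x_le.
by rewrite ler0z floor_ge0 x_ge0 (le_trans (floor_le _) x_le).
Qed.

Lemma ceil_row_eq_dist x y : ceil_row x = ceil_row y -> dist_inf x y < 1.
Proof.
move=> /rowP eq_xy; apply: dist_inf_lt => // i; move/eqP: (eq_xy i).
rewrite !mxE eqr_int => /eqP eq_i.
have := ceil_itv (x ord0 i); have := ceil_itv (y ord0 i); rewrite eq_i intrB.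
by rewrite ltr_norml => /andP [? ?] /andP [? ?]; apply/andP; split; lra.
Qed.

Lemma floor_row_eq_dist x y : floor_row x = floor_row y -> dist_inf x y < 1.
Proof.
move=> /rowP eq_xy; apply: dist_inf_lt => // i; move/eqP: (eq_xy i).
rewrite !mxE eqr_int => /eqP eq_i.
have := floor_itv (x ord0 i); have := floor_itv (y ord0 i); rewrite eq_i intrD.
by rewrite ltr_norml => /andP [? ?] /andP [? ?]; apply/andP; split; lra.
Qed.

Lemma perm_map_rounding (g : 'rV[R]_m -> 'rV[R]_m) C :
  (forall x y, g x = g y -> dist_inf x y < 1) ->
  (forall x, in_box u x -> g x \in box_lattice u) ->
  is_code u N C -> separated 1 C -> perm_eq (map g C) lattice.
Proof.
move=> g_near g_box [uC sizeC /allP C_box] sepC.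
have u_gC : uniq (map g C).
  rewrite map_inj_in_uniq // => x y xC yC eq_g; apply: contraTeq (g_near x y eq_g).
  by move/(sepC x y xC yC); rewrite -leNgt.
apply: uniq_perm; rewrite ?uniq_lattice // => v; rewrite mem_lattice.
apply: box_lattice_of_sub v; rewrite ?size_map ?sizeC //.
by move=> v /mapP [x xC ->]; apply/g_box/C_box.
Qed.

Lemma separated_code_box_lattice C :
  is_code u N C -> separated 1 C -> C =i box_lattice u.
Proof.
move=> codeC sepC; have [uC sizeC /allP C_box] := codeC.
pose gap x i := ceil_row x ord0 i - floor_row x ord0 i.
have gap_ge0 x i : 0 <= gap x i.
  by rewrite subr_ge0 !mxE (le_trans (floor_le _) (ceil_ge _)).
have sum_lattice g : perm_eq (map g C) lattice ->
    \sum_(x <- C) \sum_i g x ord0 i = \sum_(v <- lattice) \sum_i v ord0 i.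
  by move=> perm_gC; rewrite -(perm_big _ perm_gC) big_map.
have gap_sum0 : \sum_(x <- C) \sum_i gap x i = 0.
  have perm_ceil := perm_map_rounding ceil_row_eq_dist ceil_row_box_lattice codeC sepC.
  have perm_floor := perm_map_rounding floor_row_eq_dist floor_row_box_lattice codeC sepC.
  under eq_bigr do rewrite sumrB.
  by rewrite sumrB !sum_lattice ?subrr.
have C_int x i : x \in C -> x ord0 i \is a Num.int.
  move=> xC; move/eqP: gap_sum0; rewrite psumr_eq0 => [/allP/(_ x xC)/eqP|y _].
    move/psumr_eq0P => /(_ (fun i _ => gap_ge0 x i) i isT) /eqP.
    rewrite /gap !mxE subr_eq0 => /eqP eq_ceil_floor.
    by rewrite intrEfloor eq_le floor_le /= -eq_ceil_floor ceil_ge.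
  exact: sumr_ge0.
apply: box_lattice_of_sub; rewrite ?sizeC // => x xC.
by rewrite inE C_box //=; apply/forallP => i; apply: C_int.
Qed.

Lemma code_delta_le_lattice C : is_code u N C -> delta C <= delta lattice.
Proof.
move=> codeC; have [_ sizeC _] := codeC.
have [N_le1|N_gt1] := leqP N 1.
  by rewrite !delta_small ?size_lattice ?sizeC.
have [/ltW/le_trans-> //|d_ge1] := ltP (delta C) 1; first exact: delta_lattice_ge1.
have eq_CL : C =i lattice.
  move=> x; rewrite mem_lattice; apply: separated_code_box_lattice => //.
  exact: separated_of_delta_ge d_ge1.
by rewrite (eq_delta eq_CL).
Qed.

Lemma code_box_lattice_of_delta C :
  is_code u N C -> delta lattice <= delta C -> C =i box_lattice u.
Proof.
move=> codeC le_delta; apply: separated_code_box_lattice => //.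
have [N_le1|N_gt1] := leqP N 1.
  by apply: separated_small; case: codeC => _ ->.
exact/separated_of_delta_ge/(le_trans (delta_lattice_ge1 N_gt1) le_delta).
Qed.

End BoxCode.

Theorem lemma4p3 (R : realType) (m : nat) (u : 'I_m -> nat) :
  let N := (\prod_(i < m) (u i).+1)%N in
  (exists C : seq 'rV[R]_m, optimal_code u N C /\ C =i @box_lattice R m u) /\
  (forall C : seq 'rV[R]_m, optimal_code u N C -> C =i @box_lattice R m u).
Proof.
move=> N; have codeL := lattice_is_code R u.
split.
  exists (lattice R u); split; last exact: mem_lattice.
  by split=> // C; apply: code_delta_le_lattice.
by move=> C [codeC optC]; apply: code_box_lattice_of_delta (optC _ codeL).
Qed.
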